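(* Let $D,Q$ be distributions over $[N]$ with $N$ divisible by $6$, let $\varepsilon\in(0,1)$, and define $D'=\frac12D+\frac12U_{[N]}$, $Q'=\frac12Q+\frac12U_{[N]}$, $m=6N$, and $\theta_x=\frac{\lfloor mQ'(x)\rfloor/m}{Q'(x)}$ for $x\in[N]$. Define distributions $D'',Q''$ over $[N+1]$ by $D''(x)=\theta_xD'(x)$, $Q''(x)=\theta_xQ'(x)$ for $x\in[N]$, and $D''(N+1)=1-\sum_{x\in[N]}\theta_xD'(x)$, $Q''(N+1)=1-\sum_{x\in[N]}\theta_xQ'(x)$. Then: $\theta_x\ge 2/3$ for all $x\in[N]$; $Q''$ is $\frac1m$-granular (every probability is an integer multiple of $1/m$) and has full support on $[N]$; $\delta_{TV}(D',Q')=\frac12\delta_{TV}(D,Q)$; if $D=Q$ then $D''=Q''$; and if $\delta_{TV}(D,Q)>\varepsilon$ then $\delta_{TV}(D'',Q'')\ge\varepsilon/3$.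
   Context: $U_{[N]}$ is the uniform distribution over $[N]$; $\delta_{TV}(P,Q)=\frac12\sum_{x}|P(x)-Q(x)|$ denotes total variation distance. *)

From HB Require Import structures.
From mathcomp Require Import all_boot all_order all_algebra.
Set Implicit Arguments. Unset Strict Implicit. Unset Printing Implicit Defensive.
Import Order.TTheory GRing.Theory Num.Theory.
Local Open Scope ring_scope.

(* Distributions over [n] = 'I_n (element x of [N] is the ordinal x-1). *)
Definition is_distr (R : numDomainType) (n : nat) (P : 'I_n -> R) : Prop :=
  (forall i, 0 <= P i) /\ \sum_(i < n) P i = 1.

Definition dTV (R : numFieldType) (n : nat) (P Q : 'I_n -> R) : R :=
  2^-1 * \sum_(i < n) `|P i - Q i|.

Definition unif (R : numFieldType) (n : nat) : 'I_n -> R := fun _ => (n%:R)^-1.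

Definition mixU (R : numFieldType) (n : nat) (P : 'I_n -> R) : 'I_n -> R :=
  fun x => 2^-1 * P x + 2^-1 * @unif R n x.

Definition mN (N : nat) : nat := 6 * N.

Definition theta (R : archiRealFieldType) (N : nat) (Q : 'I_N -> R) (x : 'I_N) : R :=
  (((Num.floor ((mN N)%:R * mixU Q x))%:~R / (mN N)%:R) / mixU Q x).

(* D'' over [N+1] = 'I_N.+1; x in [N] is [lift ord_max x], and N+1 is [ord_max].
   [P] is the distribution being transformed (D or Q), [Q] determines theta. *)
Definition transf (R : archiRealFieldType) (N : nat) (Q P : 'I_N -> R) : 'I_N.+1 -> R :=
  fun i => match unlift ord_max i with
           | Some x => theta Q x * mixU P x
           | None => 1 - \sum_(x < N) theta Q x * mixU P x
           end.

Definition granular (R : numFieldType) (n m : nat) (P : 'I_n -> R) : Prop :=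
  forall i, exists k : int, P i = k%:~R / m%:R.

From HB Require Import structures.
From mathcomp Require Import all_boot all_order all_algebra.
From mathcomp Require Import ring lra.
Set Implicit Arguments. Unset Strict Implicit. Unset Printing Implicit Defensive.
Import Order.TTheory GRing.Theory Num.Theory.
Local Open Scope ring_scope.

(* Mixing with the uniform distribution halves every difference D x - Q x and
   makes m Q'(x) = 3 N Q(x) + 3 >= 3, so rounding m Q'(x) down loses less than
   a third of it: theta >= 2/3.  Hence the first N coordinates of D'' - Q'' are
   at least 2/3 of those of D' - Q', and dTV(D'', Q'') >= (2/3)(1/2) dTV(D, Q).
   Granularity of Q'' holds by construction, Q''(N+1) being 1 minus a sum of
   multiples of 1/m. *)

Section Mixing.
Variables (R : numFieldType) (N : nat).
Implicit Types D Q : 'I_N -> R.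

Lemma mixU_sub D Q x : mixU D x - mixU Q x = 2^-1 * (D x - Q x).
Proof. rewrite /mixU; ring. Qed.

Lemma dTV_mixU D Q : dTV (mixU D) (mixU Q) = 2^-1 * dTV D Q.
Proof.
rewrite /dTV [in RHS]mulr_sumr; congr (_ * _); apply: eq_bigr => x _.
by rewrite mixU_sub normrM ger0_norm // invr_ge0 ler0n.
Qed.

Lemma is_distr_gt0 Q : is_distr Q -> (0 < N)%N.
Proof.
case: N Q => // Q [_]; rewrite big_ord0 => /eqP.
by rewrite eq_sym oner_eq0.
Qed.

Lemma mN_mixU Q x : (0 < N)%N -> (mN N)%:R * mixU Q x = 3 * (N%:R * Q x) + 3.
Proof.
move=> N_gt0; have N_neq0 : (N%:R : R) != 0 by rewrite pnatr_eq0 -lt0n.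
by rewrite /mixU /unif /mN natrM; field.
Qed.

Lemma mN_mixU_ge3 Q x : (0 < N)%N -> 0 <= Q x -> 3 <= (mN N)%:R * mixU Q x.
Proof.
by move=> N_gt0 Qx_ge0; rewrite mN_mixU // lerDr !mulr_ge0.
Qed.

End Mixing.

Lemma floor_div_ge2_3 (R : archiRealFieldType) (y : R) :
  3 <= y -> 2 / 3 <= (Num.floor y)%:~R / y.
Proof.
move=> y_ge3; have := floorD1_gt y; rewrite intrD => floor_gt.
rewrite ler_pdivlMr; lra.
Qed.

Section Rounding.
Variables (R : archiRealFieldType) (N : nat) (Q : 'I_N -> R).
Hypothesis Q_distr : is_distr Q.

Let N_gt0 : (0 < N)%N := is_distr_gt0 Q_distr.

Let m_gt0 : (0 : R) < (mN N)%:R.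
Proof. by rewrite ltr0n /mN muln_gt0. Qed.

Let mQ'_ge3 x : 3 <= (mN N)%:R * mixU Q x.
Proof. by apply: mN_mixU_ge3 => //; case: Q_distr. Qed.

Lemma mixU_gt0 x : 0 < mixU Q x.
Proof. by rewrite -(pmulr_rgt0 _ m_gt0); have := mQ'_ge3 x; lra. Qed.

Lemma theta_ge2_3 x : 2 / 3 <= theta Q x.
Proof. by rewrite /theta -mulrA -invfM; apply: floor_div_ge2_3. Qed.

Lemma transf_lift (P : 'I_N -> R) x :
  transf Q P (lift ord_max x) = theta Q x * mixU P x.
Proof. by rewrite /transf liftK. Qed.

Lemma transf_max (P : 'I_N -> R) :
  transf Q P ord_max = 1 - \sum_(x < N) theta Q x * mixU P x.
Proof. by rewrite /transf unlift_none. Qed.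

Lemma transf_self_lift x :
  transf Q Q (lift ord_max x) = (Num.floor ((mN N)%:R * mixU Q x))%:~R / (mN N)%:R.
Proof. by rewrite transf_lift /theta divfK // gt_eqF // mixU_gt0. Qed.

Lemma granular_transf_self : granular (mN N) (transf Q Q).
Proof.
move=> i; case: (unliftP ord_max i) => [x ->|->].
  by exists (Num.floor ((mN N)%:R * mixU Q x)); rewrite transf_self_lift.
exists ((mN N)%:Z - \sum_(x < N) Num.floor ((mN N)%:R * mixU Q x)).
rewrite transf_max rmorphB /= rmorph_sum /= mulrBl divff ?gt_eqF // mulr_suml.
by congr (_ - _); apply: eq_bigr => x _; rewrite -transf_self_lift transf_lift.
Qed.

Lemma transf_self_gt0 x : 0 < transf Q Q (lift ord_max x).
Proof.
rewrite transf_lift mulr_gt0 ?mixU_gt0 //.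
by have := theta_ge2_3 x; lra.
Qed.

Lemma dTV_transf_ge (D : 'I_N -> R) :
  2 / 3 * dTV (mixU D) (mixU Q) <= dTV (transf Q D) (transf Q Q).
Proof.
rewrite /dTV mulrCA ler_pM2l ?invr_gt0 ?ltr0n // big_ord_recr /= mulr_sumr.
rewrite -[X in X <= _]addr0 lerD ?normr_ge0 //.
apply: ler_sum => x _; have -> : widen_ord (leqnSn N) x = lift ord_max x.
  by apply: val_inj; rewrite /= /bump leqNgt ltn_ord.
rewrite !transf_lift -mulrBr normrM ler_wpM2r //.
by have := theta_ge2_3 x => theta_ge; rewrite ger0_norm; lra.
Qed.

End Rounding.

Theorem mainTheorem5 (R : archiRealFieldType) (N : nat) (D Q : 'I_N -> R) (eps : R) :
  (6 %| N)%N -> is_distr D -> is_distr Q -> 0 < eps < 1 ->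
  [/\ (forall x : 'I_N, 2 / 3 <= theta Q x),
      granular (mN N) (transf Q Q)
        /\ (forall x : 'I_N, 0 < transf Q Q (lift ord_max x)),
      dTV (mixU D) (mixU Q) = 2^-1 * dTV D Q,
      (D = Q -> transf Q D = transf Q Q)
    & (dTV D Q > eps -> dTV (transf Q D) (transf Q Q) >= eps / 3)].
Proof.
move=> _ _ Q_distr _; split.
- exact: theta_ge2_3.
- by split; [exact: granular_transf_self | exact: transf_self_gt0].
- exact: dTV_mixU.
- by move=> ->.
- move=> eps_lt; have := dTV_transf_ge Q_distr D; rewrite dTV_mixU; lra.
Qed.
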